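(* Let $\mathcal{C}$ be an $\ell$-quasi-cyclic code over $\mathbb{F}_q$ of length $\ell m$ with $\gcd(m,\mathrm{char}(\mathbb{F}_q))=1$. Let $\mathbf{G}(X)\in\mathbb{F}_q[X]^{\ell\times\ell}$ be a generator matrix of $\mathcal{C}$ in RGB/POT form and let $\bar{\mathbf{G}}(X)\in\mathbb{F}_q[X]^{\ell\times\ell}$ be a generator matrix of the same code $\mathcal{C}$ in Pre-RGB/POT form. Let $\lambda$ be an eigenvalue of $\mathbf{G}(X)$. Then the right kernels of $\mathbf{G}(\lambda)$ and $\bar{\mathbf{G}}(\lambda)$ (over an extension field of $\mathbb{F}_q$ containing $\lambda$) are equal; in particular the multiplicities and corresponding eigenvectors coincide.
   Context: An $\ell$-quasi-cyclic code $\mathcal{C}$ of length $\ell m$ over $\mathbb{F}_q$ is a linear code such that if $(c_{0,0},\dots,c_{\ell-1,0},c_{0,1},\dots,c_{\ell-1,1},\dots,c_{0,m-1},\dots,c_{\ell-1,m-1})\in\mathcal{C}$ then the cyclic shift by $\ell$ positions $(c_{0,m-1},\dots,c_{\ell-1,m-1},c_{0,0},\dots,c_{\ell-1,0},\dots,c_{0,m-2},\dots,c_{\ell-1,m-2})\in\mathcal{C}$. A codeword is identified with the vector $(c_0(X),\dots,c_{\ell-1}(X))$, $c_j(X)=\sum_{i=0}^{m-1}c_{j,i}X^i$; then $\mathcal{C}$ is an $R$-submodule of $R^\ell$, $R=\mathbb{F}_q[X]/\langle X^m-1\rangle$, and is the image under componentwise reduction modulo $X^m-1$ of an $\mathbb{F}_q[X]$-submodule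 $\tilde{\mathcal{C}}\subseteq\mathbb{F}_q[X]^\ell$ containing $(X^m-1)\mathbf{e}_j$ for all $j$. A matrix $\mathbf{M}(X)\in\mathbb{F}_q[X]^{\ell\times\ell}$ is a generator matrix of $\mathcal{C}$ if its rows together with $(X^m-1)\mathbf{e}_j$, $j=0,\dots,\ell-1$, generate $\tilde{\mathcal{C}}$. It is in RGB/POT (reduced Gröbner basis, position-over-term) form if, writing $\mathbf{M}=(g_{i,j}(X))$: (C1) $g_{i,j}=0$ for $0\le j<i<\ell$; (C2) $\deg g_{j,i}<\deg g_{i,i}$ for all $j<i$; (C3) $g_{i,i}\mid X^m-1$ for all $i$; (C4) if $g_{i,i}=X^m-1$ then $g_{i,j}=0$ for all $j>i$. It is in Pre-RGB/POT form if it satisfies C1, C3 and C4 (C2 is not required), with the same diagonal entries as the RGB/POT form. An eigenvalue of $\mathbf{G}(X)$ is a root (in an extension field) of $\det\mathbf{G}(X)=\prod_i g_{i,i}(X)$; its algebraic multiplicity is the largest $\mu$ with $(X-\lambda)^\mu\mid\det\mathbf{G}(X)$, and its geometric multiplicity is the dimension of the right kernel of $\mathbf{G}(\lambda)$. *)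

From HB Require Import structures.
From mathcomp Require Import all_boot all_order all_algebra all_field.
Set Implicit Arguments. Unset Strict Implicit. Unset Printing Implicit Defensive.
Import GRing.Theory.
Local Open Scope ring_scope.

Definition gen_by (F : fieldType) (l m : nat) (M : 'M[{poly F}]_l)
  (v : 'rV[{poly F}]_l) : Prop :=
  exists a b : 'rV[{poly F}]_l, v = a *m M + ('X^m - 1) *: b.

(* M is a generator matrix of the quasi-cyclic code whose preimage
   tilde-C in F[X]^l is Ct. *)
Definition is_gen_matrix (F : fieldType) (l m : nat)
  (Ct : 'rV[{poly F}]_l -> Prop) (M : 'M[{poly F}]_l) : Prop :=
  forall v, Ct v <-> gen_by m M v.

(* Conditions C1..C4; deg g_{j,i} < deg g_{i,i} is expressed with size
   (size = deg + 1, size 0 = 0, consistent with deg 0 = -oo). *)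
Definition C1 (F : fieldType) (l : nat) (M : 'M[{poly F}]_l) :=
  forall i j : 'I_l, (j < i)%N -> M i j = 0.
Definition C2 (F : fieldType) (l : nat) (M : 'M[{poly F}]_l) :=
  forall i j : 'I_l, (j < i)%N -> (size (M j i) < size (M i i))%N.
Definition C3 (F : fieldType) (l m : nat) (M : 'M[{poly F}]_l) :=
  forall i : 'I_l, M i i %| 'X^m - 1.
Definition C4 (F : fieldType) (l m : nat) (M : 'M[{poly F}]_l) :=
  forall i : 'I_l, M i i = 'X^m - 1 -> forall j : 'I_l, (i < j)%N -> M i j = 0.

Definition RGB_POT (F : fieldType) (l m : nat) (M : 'M[{poly F}]_l) :=
  [/\ C1 M, C2 M, C3 m M & C4 m M].

Definition PreRGB_POT (F : fieldType) (l m : nat) (G M : 'M[{poly F}]_l) :=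
  [/\ C1 M, C3 m M, C4 m M & forall i : 'I_l, M i i = G i i].

Definition eval_mx (F L : fieldType) (iota : {rmorphism F -> L}) (l : nat)
  (M : 'M[{poly F}]_l) (lam : L) : 'M[L]_l :=
  map_mx (fun p => (map_poly iota p).[lam]) M.

Definition eigenvalue_of (F L : fieldType) (iota : {rmorphism F -> L}) (l : nat)
  (M : 'M[{poly F}]_l) (lam : L) : bool :=
  root (map_poly iota (\det M)) lam.

(* right kernel membership and geometric multiplicity = dim right kernel *)
Definition in_rker (L : fieldType) (l : nat) (A : 'M[L]_l) (v : 'cV[L]_l) :=
  A *m v == 0.
Definition geom_mult (L : fieldType) (l : nat) (A : 'M[L]_l) : nat :=
  (l - \rank A)%N.

(** Both matrices generate the same module, which contains (X^m - 1) F[X]^l.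
    An eigenvalue of the triangular matrix G is a root of some diagonal entry,
    hence of X^m - 1; so after evaluation at it the multiples of X^m - 1
    vanish and the rows of G(lam) and Gbar(lam) span the same space. Equal row
    spaces give equal right kernels. *)
From HB Require Import structures.
From mathcomp Require Import all_boot all_order all_algebra all_field.
Local Open Scope ring_scope.
Import GRing.Theory.

Section EvaluationAtRoot.

Context {F L : fieldType} {iota : {rmorphism F -> L}} {lam : L}.

Let iota_lam_comm : commr_rmorph iota lam := fun x => mulrC _ _.

Local Notation ev := (horner_morph iota_lam_comm).

Lemma eigenvalue_root_diag {l : nat} {M : 'M[{poly F}]_l} :
  C1 M -> eigenvalue_of iota M lam -> exists i : 'I_l, ev (M i i) = 0.
Proof.
move=> lowM0 eigM; have trigMT : is_trig_mx M^T.
  by apply/is_trig_mxP => i j ltji; rewrite mxE lowM0.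
move: eigM; rewrite /eigenvalue_of -det_tr (det_trig trigMT) rootE.
rewrite (eq_bigr (fun i => M i i)) => [|i _]; last by rewrite mxE.
rewrite -[_.[lam]]/(ev _) rmorph_prod prodf_seq_eq0 => /hasP[i _ /eqP evMii].
by exists i.
Qed.

Lemma eigenvalue_root_Xn_sub1 {l m : nat} {M : 'M[{poly F}]_l} :
  C1 M -> C3 m M -> eigenvalue_of iota M lam -> ev ('X^m - 1) = 0.
Proof.
move=> lowM0 diagM_dvd /(eigenvalue_root_diag lowM0)[i evMii].
by have /dvdpP[q ->] := diagM_dvd i; rewrite rmorphM /= evMii mulr0.
Qed.

Lemma eval_gen_by_sub {l m : nat} {M : 'M[{poly F}]_l} {v : 'rV_l} :
  ev ('X^m - 1) = 0 -> gen_by m M v ->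
  (map_mx ev v <= eval_mx iota M lam)%MS.
Proof.
move=> evXm1 [a [b ->]].
rewrite map_mxD map_mxM map_mxZ [X in X *: _]evXm1 scale0r addr0; exact: submxMl.
Qed.

Lemma eval_gen_matrix_sub {l m : nat} {Ct : 'rV[{poly F}]_l -> Prop}
    (M N : 'M[{poly F}]_l) :
  ev ('X^m - 1) = 0 -> is_gen_matrix m Ct M -> is_gen_matrix m Ct N ->
  (eval_mx iota N lam <= eval_mx iota M lam)%MS.
Proof.
move=> evXm1 genM genN; apply/row_subP => i.
rewrite -[eval_mx _ _ _]/(map_mx ev N) -map_row.
apply: (eval_gen_by_sub evXm1); apply/genM/genN.
by exists (delta_mx 0 i), 0; rewrite scaler0 addr0 -rowE.
Qed.

End EvaluationAtRoot.

Lemma rker_eqmx (K : fieldType) (l : nat) (A B : 'M[K]_l) (v : 'cV_l) :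
  (A == B)%MS -> in_rker A v <-> in_rker B v.
Proof.
have rker_sub (C D : 'M[K]_l) : (C <= D)%MS -> in_rker D v -> in_rker C v.
  by move=> /submxP[E ->] /eqP Dv0; rewrite /in_rker -mulmxA Dv0 mulmx0.
by move=> /andP[subAB subBA]; split; apply: rker_sub.
Qed.

Lemma geom_mult_eqmx (K : fieldType) (l : nat) (A B : 'M[K]_l) :
  (A == B)%MS -> geom_mult A = geom_mult B.
Proof. by move=> eqAB; rewrite /geom_mult (eqmx_rank eqAB). Qed.

Theorem lemma2 (F : finFieldType) (L : fieldType) (iota : {rmorphism F -> L})
  (l m : nat) (Ct : 'rV[{poly F}]_l -> Prop) (G Gbar : 'M[{poly F}]_l) (lam : L) :
  (0 < m)%N ->
  (forall p : nat, p \in [pchar F] -> coprime m p) ->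
  is_gen_matrix m Ct G -> RGB_POT m G ->
  is_gen_matrix m Ct Gbar -> PreRGB_POT m G Gbar ->
  eigenvalue_of iota G lam ->
  (forall v : 'cV[L]_l,
      in_rker (eval_mx iota G lam) v <-> in_rker (eval_mx iota Gbar lam) v) /\
  geom_mult (eval_mx iota G lam) = geom_mult (eval_mx iota Gbar lam).
Proof.
move=> _ _ genG [lowG0 _ diagG_dvd _] genGbar _ eigG.
have evXm1 := eigenvalue_root_Xn_sub1 lowG0 diagG_dvd eigG.
have eqG_Gbar : (eval_mx iota G lam == eval_mx iota Gbar lam)%MS.
  by apply/andP; split; apply: eval_gen_matrix_sub evXm1 _ _.
split; last exact: geom_mult_eqmx.
by move=> v; apply: rker_eqmx.
Qed.
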